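(* Let $p$ be a prime, $a$ a positive integer and $N=p^a$. For $j\in\{0,1,\dots,N-1\}$ let $x_j=(x_{0,j},x_{1,j},\dots,x_{N-1,j})\in\mathbb{Z}_p^{N}$ where $x_{i,j}=\binom{i}{j}\bmod p$. Then for every $j$ and every cyclic shift $x'_j$ of $x_j$ (i.e. $x'_j=(x_{k,j},x_{k+1,j},\dots,x_{k-1,j})$ for some $k$, indices mod $N$), the difference $x_j-x'_j$ is a $\mathbb{Z}_p$-linear combination of $x_0,x_1,\dots,x_{j-1}$ (for $j=0$ this means $x_0-x'_0=0$). *)

From mathcomp Require Import all_boot all_algebra.
Set Implicit Arguments. Unset Strict Implicit. Unset Printing Implicit Defensive.
Import GRing.Theory.
Local Open Scope ring_scope.

Definition xvec (p N j : nat) : 'I_N -> 'F_p := fun i => ('C(i, j))%:R.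

Definition shift_idx (N k : nat) (i : 'I_N) : 'I_N :=
  match N as n return 'I_n -> 'I_n with
  | 0 => fun i => i
  | n.+1 => fun i => inord ((i + k) %% n.+1)
  end i.

Definition cshift (p N k : nat) (v : 'I_N -> 'F_p) : 'I_N -> 'F_p :=
  fun i => v (shift_idx k i).

(* Frobenius in characteristic p gives (1 + X)^(p^a) = 1 + X^(p^a), i.e. all
   the inner binomial coefficients C(p^a, l) vanish.  By Vandermonde's identity
   i |-> C(i, j) mod p is then p^a-periodic for j < p^a, so reading indices
   mod p^a is harmless, and Vandermonde once more expands the shifted vector:
   C(i + k, j) = C(i, j) + sum_(l < j) C(k, j - l) C(i, l). *)

From mathcomp Require Import all_boot all_algebra.
Import GRing.Theory.
Local Open Scope ring_scope.

Section BinomialCharacteristic.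

Variables (R : comNzSemiRingType) (p a : nat).
Hypothesis charRp : p \in [pchar R].

Lemma pchar_bin_pexp l : (0 < l < p ^ a)%N -> 'C(p ^ a, l)%:R = 0 :> R.
Proof.
case/andP=> l_gt0 l_lt; have charXp : p \in [pchar {poly R}] by rewrite pchar_poly.
have pa_nat : [pchar {poly R}].-nat (p ^ a)%N.
  by rewrite (eq_pnat _ (pcharf_eq charXp)) pnatX pnat_id ?(pcharf_prime charRp).
have := congr1 (coefp l) (exprDn_pchar 'X 1 pa_nat).
rewrite exprD1n /= coef_sum expr1n coefD coefXn coefC (gtn_eqF l_gt0).
rewrite (ltn_eqF l_lt) addr0 (bigD1 (@Ordinal (p ^ a).+1 l (ltnW l_lt))) //= coefMn coefXn eqxx.
rewrite big1 ?addr0 // => i; rewrite -val_eqE /= => /negPf i_neq_l.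
by rewrite coefMn coefXn eq_sym i_neq_l mul0rn.
Qed.

Lemma pchar_binDpexp n j : (j < p ^ a)%N -> 'C(p ^ a + n, j)%:R = 'C(n, j)%:R :> R.
Proof.
move=> j_lt; rewrite -binomial.Vandermonde natr_sum big_ord_recl /= bin0 subn0 mul1n.
rewrite big1 ?addr0 // => i _; rewrite natrM pchar_bin_pexp ?mul0r //.
by rewrite /bump leq0n add1n (leq_ltn_trans (ltn_ord i) j_lt).
Qed.

Lemma pchar_bin_modpexp n j : (j < p ^ a)%N ->
  'C(n %% p ^ a, j)%:R = 'C(n, j)%:R :> R.
Proof.
move=> j_lt; rewrite {2}(divn_eq n (p ^ a)).
elim: (n %/ p ^ a)%N => [|q IHq]; first by rewrite mul0n add0n.
by rewrite mulSn -addnA pchar_binDpexp.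
Qed.

End BinomialCharacteristic.

Lemma shift_idxE N k (i : 'I_N) : shift_idx k i = ((i + k) %% N)%N :> nat.
Proof. by case: N i => [[]//|n] i /=; rewrite inordK // ltn_pmod. Qed.

Lemma natr_binD (R : pzSemiRingType) n k j :
  'C(n + k, j)%:R = 'C(n, j)%:R + \sum_(l < j) 'C(k, j - l)%:R * 'C(n, l)%:R :> R.
Proof.
rewrite -binomial.Vandermonde natr_sum big_ord_recr /= subnn bin0 muln1 addrC.
by congr (_ + _); apply: eq_bigr => l _; rewrite mulnC natrM.
Qed.

Theorem claim4p2 (p a : nat) (hp : prime p) (ha : (0 < a)%N)
  (j : nat) (hj : (j < p ^ a)%N) (k : nat) :
  exists c : 'I_j -> 'F_p,
    forall i : 'I_(p ^ a),
      xvec p j i - cshift k (xvec p j) i = \sum_(l < j) c l * xvec p l i.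
Proof.
exists (fun l => - 'C(k, j - l)%:R) => i.
rewrite /cshift /xvec shift_idxE pchar_bin_modpexp ?pchar_Fp // natr_binD.
by rewrite opprD addNKr -sumrN; apply: eq_bigr => l _; rewrite mulNr.
Qed.
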